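(* Let $m\ge1$ and consider a preferential (dynamic) attachment circuit of index $m$. For $0\le j\le n$ let $D^{(m)}_{n,j}$ be the degree (indegree plus outdegree, edges counted with multiplicity) of node $j$ at time $n$. Then for $n\ge j$ and every integer $d$, $$\mathbb{P}\bigl(D^{(m)}_{n,j}=d\bigr)=\bigl(d-m(1-\delta_{j,0})\bigr)!\sum_{\substack{b_1+\cdots+b_{n-j}=m(n-j+1-\delta_{j,0})-d\\ 0\le b_1\le\min\{m,(m+1)j\}}}\left(\prod_{r=1}^{n-j}\binom{m}{b_r}\right)\frac{\prod_{r=1}^{n-j}\bigl\langle (m+1)j+\sum_{\ell=1}^{r-1}b_\ell+r-1\bigr\rangle_{b_r}}{\prod_{r=0}^{n-j-1}\langle (m+1)(j+r)+1\rangle_m},$$ where the sum is over tuples $(b_1,\dots,b_{n-j})$ of nonnegative integers.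
   Context: Preferential (dynamic) attachment circuit of index $m\ge1$: at time $0$ there is a single node labeled $0$. At each time $n\ge1$ a new node labeled $n$ is added and $m$ parents are chosen for it one at a time, with replacement, among nodes $0,\dots,n-1$. Before the $(i+1)$-th choice ($i=0,\dots,m-1$), each existing node $v$ is chosen with probability $\frac{d_i(v)+1}{\sum_{x}(d_i(x)+1)}$, where $d_i(x)$ is the outdegree of $x$ in the current multigraph including the edges created by the first $i$ choices for node $n$; after each choice an edge from the chosen parent to node $n$ is immediately added (multi-edges allowed). $\langle x\rangle_s=x(x+1)\cdots(x+s-1)$ is the rising factorial, $\langle x\rangle_0=1$; $\delta_{j,0}$ is the Kronecker delta. *)

From mathcomp Require Import all_boot all_order all_algebra.
Set Implicit Arguments. Unset Strict Implicit. Unset Printing Implicit Defensive.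
Import Order.TTheory GRing.Theory Num.Theory.
Local Open Scope ring_scope.

(* A full history up to time n is the flat sequence s of the n*m parent
   choices in chronological order: the k-th choice (k = 0,1,...) is the
   ((k mod m)+1)-th choice of node  k %/ m + 1.  The edge created by choice k
   goes from parent s_k to node k %/ m + 1. *)

Definition choice_time (m k : nat) : nat := (k %/ m).+1.

(* conditional probability of the k-th choice given the previous ones:
   node x is chosen w.p. (d(x)+1) / sum_{y < t} (d(y)+1), where d is the
   outdegree in the current multigraph (all previous choices). *)
Definition step_prob (m : nat) (s : seq nat) (k : nat) : rat :=
  let t := choice_time m k in
  let pre := take k s in
  let x := nth 0%N s k in
  if (x < t)%N then
    ((count_mem x pre).+1)%:R / (\sum_(y < t) (count_mem (y : nat) pre).+1)%:R
  else 0.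

Definition path_prob (m n : nat) (s : seq nat) : rat :=
  \prod_(k < n * m) step_prob m s k.

Definition degree (m n : nat) (s : seq nat) (j : nat) : nat :=
  \sum_(k < n * m) ((nth 0%N s k == j) + (choice_time m k == j))%N.

(* P(D^{(m)}_{n,j} = d): sum over all histories (labels in 'I_n.+1; invalid
   histories have probability 0) *)
Definition prob_degree (m n j : nat) (d : int) : rat :=
  \sum_(s : (n * m).-tuple 'I_n.+1)
     if ((degree m n (map val s) j)%:Z == d) then path_prob m n (map val s) else 0.

Definition rising (x s : nat) : nat := \prod_(i < s) (x + i)%N.

(* factorial of an integer argument; convention 0 for negative arguments
   (only occurs where the accompanying sum vanishes) *)
Definition intfact (z : int) : nat :=
  match z with Posz k => k`! | Negz _ => 0%N end.

(* The degree of node j at time n is m (1 - δ_{j,0}) plus the number of the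
   n m parent choices that hit j.  Every existing node has weight outdegree + 1,
   so after K choices, made while node t is being added, the weights sum to
   K + t, and the next choice hits j with probability (c + 1) / (K + t) if j
   has been hit c times so far.  This gives a two-term recurrence in K for the
   law of the number of hits.  Its solution at the end of block r (the m
   choices of node j + r) is c! S_r(r m - c), where S_r(b) sums, over all ways
   of splitting the b misses among the r blocks, the products of the factors
   C(m, b_i) <(m+1) j + b_1 + ... + b_{i-1} + i - 1>_{b_i} / <(m+1)(j+i-1)+1>_m;
   the rising factorial in the numerator records that each miss raises the
   weight of the other nodes by one. *)

From mathcomp Require Import all_boot all_order all_algebra.
From mathcomp Require Import ring zify.
Import Order.TTheory GRing.Theory Num.Theory.
Local Open Scope ring_scope.
Set Implicit Arguments. Unset Strict Implicit. Unset Printing Implicit Defensive.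

Lemma big_tuple_cons (V : nmodType) (T : finType) r (F : r.+1.-tuple T -> V) :
  \sum_(b : r.+1.-tuple T) F b = \sum_(x : T) \sum_(t : r.-tuple T) F [tuple of x :: t].
Proof.
rewrite pair_big /= (reindex (fun p : T * r.-tuple T => [tuple of p.1 :: p.2])) //=.
exists (fun b : r.+1.-tuple T => (thead b, [tuple of behead b])).
  by move=> [x t] _ /=; congr pair; apply: val_inj.
by move=> b _; rewrite [RHS]tuple_eta.
Qed.

Lemma big_tuple_rcons (V : nmodType) (T : finType) r (F : r.+1.-tuple T -> V) :
  \sum_(b : r.+1.-tuple T) F b = \sum_(t : r.-tuple T) \sum_(x : T) F [tuple of rcons t x].
Proof.
have rev_inj k : injective (fun b : k.-tuple T => [tuple of rev b]).
  by move=> a b /(congr1 val) /(can_inj revK) ab; apply: val_inj.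
rewrite (reindex_inj (rev_inj r.+1)) big_tuple_cons exchange_big [RHS](reindex_inj (rev_inj r)).
by apply: eq_bigr => t _; apply: eq_bigr => x _; congr F; apply: val_inj; rewrite /= rev_cons.
Qed.

Lemma big_tuple0 (V : nmodType) (T : finType) (F : 0.-tuple T -> V) :
  \sum_(b : 0.-tuple T) F b = F [tuple].
Proof. by rewrite (big_pred1 [tuple]) // => b; rewrite [b]tuple0 /= eqxx. Qed.

Lemma val_tnth_nth R N (t : R.-tuple 'I_N) i : (tnth t i : nat) = nth 0%N (map val t) i.
Proof. by rewrite -(tnth_map val) (tnth_nth 0%N). Qed.

Lemma sum_count_mem_ord (s : seq nat) T :
  (\sum_(y < T) count_mem (y : nat) s = count (fun x => x < T) s)%N.
Proof.
elim: s => [|x s IH] /=; first by rewrite big1.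
rewrite big_split /= IH; congr (_ + _)%N.
have [xT|Tx] := ltnP x T.
  2: by rewrite big1 // => y _; rewrite gtn_eqF // (leq_trans (ltn_ord y) Tx).
rewrite (bigD1 (Ordinal xT)) //= eqxx big1 // => y /eqP yx.
by case: eqP => // xy; case: yx; apply: val_inj.
Qed.

Section Histories.
Variable m : nat.

Definition history_prob (s : seq nat) : rat := \prod_(k < size s) step_prob m s k.

Definition total_weight (s : seq nat) : nat :=
  \sum_(y < choice_time m (size s)) (count_mem (y : nat) s).+1.

Lemma path_prob_history n (s : (n * m).-tuple 'I_n.+1) :
  path_prob m n (map val s) = history_prob (map val s).
Proof. by rewrite /history_prob size_map size_tuple. Qed.

Lemma step_prob_rcons s x k : (k < size s)%N ->
  step_prob m (rcons s x) k = step_prob m s k.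
Proof. by move=> ks; rewrite /step_prob nth_rcons ks -cats1 takel_cat // ltnW. Qed.

Lemma step_prob_rcons_last s x :
  step_prob m (rcons s x) (size s) =
  if (x < choice_time m (size s))%N then (count_mem x s).+1%:R / (total_weight s)%:R
  else 0.
Proof. by rewrite /step_prob nth_rcons ltnn eqxx -cats1 take_size_cat. Qed.

Lemma history_prob_rcons s x :
  history_prob (rcons s x) = history_prob s * step_prob m (rcons s x) (size s).
Proof.
rewrite /history_prob size_rcons big_ord_recr /=; congr (_ * _).
by apply: eq_bigr => k _; rewrite step_prob_rcons.
Qed.

Lemma history_prob_neq0_nth s : history_prob s != 0 ->
  forall k, (k < size s)%N -> (nth 0%N s k < choice_time m k)%N.
Proof.
move=> /prodf_neq0 s_valid k ks; have := s_valid (Ordinal ks) isT.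
by rewrite /step_prob /=; case: ifP; rewrite ?eqxx.
Qed.

(* Every earlier choice is an edge out of an existing node, so the weights
   d(y) + 1 of the t existing nodes add up to (number of choices) + t. *)
Lemma total_weight_history s : history_prob s != 0 ->
  total_weight s = (size s + choice_time m (size s))%N.
Proof.
move=> s_valid; rewrite /total_weight.
under eq_bigr do rewrite -addn1.
rewrite big_split /= sum_count_mem_ord sum_nat_const card_ord muln1; congr (_ + _)%N.
apply/eqP; rewrite -all_count; apply/(all_nthP 0%N) => k ks.
apply: leq_trans (history_prob_neq0_nth s_valid ks) _.
by rewrite ltnS leq_div2r // ltnW.
Qed.

Lemma sum_step_prob n s : (choice_time m (size s) <= n.+1)%N -> history_prob s != 0 ->
  \sum_(x : 'I_n.+1) step_prob m (rcons s x) (size s) = 1.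
Proof.
move=> le_tn s_valid; under eq_bigr do rewrite step_prob_rcons_last.
rewrite -big_mkcond /= (big_ord_narrow le_tn) -mulr_suml -natr_sum -/(total_weight s) divff //.
by rewrite total_weight_history // pnatr_eq0 addnS.
Qed.

Definition hit_prob (j K c : nat) : rat :=
  if (j < choice_time m K)%N then c.+1%:R / (K + choice_time m K)%:R else 0.

Lemma step_prob_hit j s :
  history_prob s * step_prob m (rcons s j) (size s) =
  history_prob s * hit_prob j (size s) (count_mem j s).
Proof.
have [->|s_valid] := eqVneq (history_prob s) 0; first by rewrite !mul0r.
by rewrite step_prob_rcons_last total_weight_history.
Qed.

Lemma count_mem_rcons (j : nat) s x :
  count_mem j (rcons s x) = (count_mem j s + (x == j))%N.
Proof. by rewrite -cats1 count_cat /= addn0. Qed.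

Lemma sum_history_rcons n j s (F : nat -> rat) :
  (j <= n)%N -> (choice_time m (size s) <= n.+1)%N ->
  let c := count_mem j s in
  \sum_(x : 'I_n.+1) F (count_mem j (rcons s x)) * history_prob (rcons s x) =
  history_prob s * (F c * (1 - hit_prob j (size s) c) + F c.+1 * hit_prob j (size s) c).
Proof.
move=> le_jn le_tn c.
have [s_0|s_valid] := eqVneq (history_prob s) 0.
  by rewrite s_0 mul0r big1 // => x _; rewrite history_prob_rcons s_0 !mul0r mulr0.
have j_inord : j = (inord j : 'I_n.+1) :> nat by rewrite inordK.
have miss x : x != inord j :> 'I_n.+1 -> count_mem j (rcons s x) = c.
  move=> xj; rewrite count_mem_rcons; case: eqP => [x_j|]; last by rewrite addn0.
  by case/eqP: xj; apply: val_inj; rewrite /= x_j.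
have sum1 := sum_step_prob le_tn s_valid.
rewrite (bigD1 (inord j)) //= -j_inord in sum1.
have sum_miss : \sum_(x < n.+1 | x != inord j) step_prob m (rcons s x) (size s) =
    1 - step_prob m (rcons s j) (size s).
  by rewrite -sum1 addrC addrK.
rewrite (bigD1 (inord j)) //= -j_inord count_mem_rcons eqxx addn1.
under eq_bigr => x xj do rewrite miss // history_prob_rcons mulrA.
rewrite -mulr_sumr sum_miss history_prob_rcons step_prob_hit -mulrA mulrBr mulr1.
rewrite step_prob_hit; ring.
Qed.

End Histories.

Definition count_prob (m n j K c : nat) : rat :=
  \sum_(t : K.-tuple 'I_n.+1) (count_mem j (map val t) == c)%:R * history_prob m (map val t).

Lemma count_prob0 m n j c : count_prob m n j 0 c = (c == 0%N)%:R.
Proof. by rewrite /count_prob big_tuple0 /history_prob big_ord0 mulr1 eq_sym. Qed.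

Lemma count_probS m n j K c : (0 < m)%N -> (j <= n)%N -> (K < n * m)%N ->
  count_prob m n j K.+1 c =
    count_prob m n j K c * (1 - hit_prob m j K c) +
    (if c is c'.+1 then count_prob m n j K c' * hit_prob m j K c' else 0).
Proof.
move=> m_gt0 le_jn lt_Kn.
have le_tn : (choice_time m K <= n.+1)%N by rewrite ltnS ltnW // ltn_divLR.
rewrite /count_prob big_tuple_rcons.
under eq_bigr => t _.
  under eq_bigr do rewrite /= map_rcons.
  rewrite (sum_history_rcons (fun k => (k == c)%:R)) ?size_map ?size_tuple //.
  over.
case: c => [|c] /=.
  rewrite addr0 mulr_suml; apply: eq_bigr => t _; move: (count_mem j _) => k.
  by case: eqP => [->|_] /=; ring.
rewrite !mulr_suml -big_split; apply: eq_bigr => t _ /=; move: (count_mem j _) => k.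
rewrite eqSS; case: (eqVneq k c) => [->|_]; first by rewrite ltn_eqF //=; ring.
by case: (eqVneq k c.+1) => [->|_] /=; ring.
Qed.

Lemma risingn0 x : rising x 0 = 1%N.
Proof. by rewrite /rising big_ord0. Qed.

Lemma rising0S s : rising 0 s.+1 = 0%N.
Proof. by rewrite /rising big_ord_recl mul0n. Qed.

Lemma risingS x s : rising x s.+1 = (rising x s * (x + s))%N.
Proof. by rewrite /rising big_ord_recr. Qed.

Lemma rising_gt0 x s : (0 < x)%N -> (0 < rising x s)%N.
Proof. by move=> x_gt0; rewrite prodn_gt0 // => i; rewrite addn_gt0 x_gt0. Qed.

Section MissWeights.
Variables m j : nat.

(* Block r consists of the m choices of node j + r + 1.  At its start the
   total weight is block_weight r, and after b of the choices made since
   time j missed node j, the other nodes carry weight others_weight r b. *)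
Definition block_weight (r : nat) : nat := ((m + 1) * (j + r) + 1)%N.
Definition others_weight (r b : nat) : nat := ((m + 1) * j + b + r)%N.

Definition block_factor (r i b x : nat) : rat :=
  ('C(i, x) * rising (others_weight r b) x)%:R / (rising (block_weight r) i)%:R.

Fixpoint miss_weight (r b : nat) : rat :=
  if r is r'.+1 then \sum_(b0 < b.+1) miss_weight r' b0 * block_factor r' m b0 (b - b0)
  else (b == 0%N)%:R.

Definition partial_miss_weight (r i b : nat) : rat :=
  \sum_(b0 < b.+1) miss_weight r b0 * block_factor r i b0 (b - b0).

Lemma partial_miss_weight_gt r i b : (r * m + i < b)%N ->
  (forall b0, (r * m < b0)%N -> miss_weight r b0 = 0) -> partial_miss_weight r i b = 0.
Proof.
move=> ltb miss0; rewrite /partial_miss_weight /block_factor big1 // => b0 _.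
have [/miss0->|le_b0] := ltnP (r * m) b0; first by rewrite !mul0r.
by rewrite bin_small ?mul0n ?mul0r ?mulr0 //; lia.
Qed.

Lemma miss_weight_gt r b : (r * m < b)%N -> miss_weight r b = 0.
Proof.
elim: r b => [|r IH] b ltb; first by case: b ltb.
by apply: partial_miss_weight_gt IH; lia.
Qed.

Lemma partial_miss_weight0 r b : partial_miss_weight r 0 b = miss_weight r b.
Proof.
rewrite /partial_miss_weight /block_factor big_ord_recr /= subnn bin0 !risingn0 mul1n divr1.
rewrite big1 ?add0r // => b0 _; rewrite bin_small ?mul0n ?mul0r ?mulr0 // subn_gt0.
exact: ltn_ord.
Qed.

(* Pascal's rule for the binomial coefficient and the last factor of the
   rising factorials give the recurrence in the number i of choices made. *)
Lemma partial_miss_weightS r i b :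
  partial_miss_weight r i.+1 b * (block_weight r + i)%:R =
  partial_miss_weight r i b +
    (if b is b'.+1 then (others_weight r b')%:R * partial_miss_weight r i b' else 0).
Proof.
have W_neq0 : (rising (block_weight r) i)%:R != 0 :> rat.
  by rewrite pnatr_eq0 -lt0n rising_gt0 // /block_weight addn1.
have w_neq0 : (block_weight r + i)%:R != 0 :> rat by rewrite pnatr_eq0 /block_weight addn1.
rewrite /partial_miss_weight /block_factor risingS natrM.
move: W_neq0 w_neq0; move: (rising _ i)%:R (block_weight r + i)%:R => W w W_neq0 w_neq0.
case: b => [|b].
  by rewrite !big_ord1 !subnn !bin0 !risingn0 !mul1n addr0; field; apply/andP.
rewrite big_ord_recr [X in _ = X + _]big_ord_recr /= subnn !bin0 !risingn0 !mul1n.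
rewrite mulrDl [RHS]addrAC; congr (_ + _); last by field; apply/andP.
rewrite big_distrl mulr_sumr -big_split; apply: eq_bigr => b0 _ /=.
have lt_b0 := ltn_ord b0.
have -> : (b.+1 - b0 = (b - b0).+1)%N by lia.
rewrite binS risingS.
have -> : (others_weight r b0 + (b - b0))%N = others_weight r b by rewrite /others_weight; lia.
by rewrite !natrM natrD; field; apply/andP.
Qed.

Definition tuple_term (R : nat) (s : seq nat) : rat :=
  \prod_(i < R) block_factor i m (\sum_(l < i) nth 0%N s l) (nth 0%N s i).

Lemma tuple_term_rcons R s x : size s = R ->
  tuple_term R.+1 (rcons s x) = tuple_term R s * block_factor R m (sumn s) x.
Proof.
move=> size_s; rewrite /tuple_term big_ord_recr /=.
have nth_s k : (k < R)%N -> nth 0%N (rcons s x) k = nth 0%N s k.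
  by move=> ltk; rewrite nth_rcons size_s ltk.
rewrite nth_rcons size_s ltnn eqxx sumnE (big_nth 0%N) big_mkord size_s.
under [\sum_(l < R) _]eq_bigr => l _ do rewrite nth_s //.
congr (_ * _); apply: eq_bigr => i _; rewrite nth_s //; congr block_factor.
by apply: eq_bigr => l _; rewrite nth_s // (ltn_trans (ltn_ord l)).
Qed.

Lemma sum_tuple_term R N b : (b <= N)%N ->
  \sum_(t : R.-tuple 'I_N.+1 | sumn (map val t) == b) tuple_term R (map val t) =
  miss_weight R b.
Proof.
elim: R b => [|R IH] b le_bN.
  by rewrite big_mkcond big_tuple0 /tuple_term big_ord0; case: b {le_bN}.
rewrite big_mkcond big_tuple_rcons exchange_big /=.
have sum_last (x : 'I_N.+1) :
  \sum_(t : R.-tuple 'I_N.+1)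
    (if sumn (map val (rcons t x)) == b then tuple_term R.+1 (map val (rcons t x)) else 0) =
  if (x <= b)%N then miss_weight R (b - x) * block_factor R m (b - x) x else 0.
  have [le_xb|lt_bx] := leqP x b; last first.
    by rewrite big1 // => t _; rewrite map_rcons sumn_rcons ifF //; apply/negbTE/eqP => /=; lia.
  rewrite -(IH (b - x)%N) ?(leq_trans (leq_subr _ _)) // mulr_suml [RHS]big_mkcond /=.
  apply: eq_bigr => t _; rewrite map_rcons sumn_rcons tuple_term_rcons ?size_map ?size_tuple //.
  have -> : (sumn (map val t) + x == b) = (sumn (map val t) == b - x)%N by apply/eqP/eqP; lia.
  by case: eqP => [->|]; rewrite ?mul0r.
rewrite (eq_bigr _ (fun x _ => sum_last x)) -big_mkcond /=.
rewrite (eq_bigl (fun x : 'I_N.+1 => (x < b.+1)%N)) // big_ord_narrow //=.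
rewrite (reindex_inj rev_ord_inj); apply: eq_bigr => x _ /=.
by rewrite subSS subKn // -ltnS.
Qed.

Lemma tuple_termE R N (b : R.-tuple 'I_N) :
  (\prod_(i < R) 'C(m, tnth b i))%:R *
    ((\prod_(i < R)
        rising ((m + 1) * j + \sum_(l < R | (l < i)%N) (tnth b l : nat) + i) (tnth b i))%:R
     / (\prod_(r < R) rising ((m + 1) * (j + r) + 1) m)%:R) =
  tuple_term R (map val b).
Proof.
rewrite /tuple_term /block_factor prodf_div.
under [in RHS]eq_bigr do rewrite natrM.
rewrite big_split -!natr_prod -mulrA.
congr (_%:R * (_%:R / _%:R)); apply: eq_bigr => i _; rewrite ?val_tnth_nth //.
congr (rising _ _); rewrite (big_ord_narrow (ltnW (ltn_ord i))) /others_weight.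
by congr (_ + _ + _)%N; apply: eq_bigr => l _; rewrite val_tnth_nth.
Qed.

(* The constraint b_1 <= min(m, (m+1) j) of the informal formula is
   redundant: a first entry violating it makes the binomial factor vanish,
   or (when j = 0) the rising factorial from weight 0. *)
Lemma tuple_term_head_gt R s : (0 < R)%N -> (minn m ((m + 1) * j) < nth 0%N s 0)%N ->
  tuple_term R s = 0.
Proof.
case: R => // R _ lt_head; rewrite /tuple_term big_ord_recl /= /block_factor big_ord0.
have [lt_m_head|le_head_m] := ltnP m (nth 0%N s 0).
  by rewrite bin_small // mul0n !mul0r.
have j0 : j = 0%N by move: lt_head; rewrite /minn; case: ifP; nia.
move: lt_head; rewrite /others_weight j0 muln0 minn0; case: (nth 0%N s 0) => // x _.
by rewrite rising0S muln0 !mul0r.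
Qed.

Lemma sum_tuple_term_constrained R b :
  \sum_(t : R.-tuple 'I_b.+1 |
          ((\sum_(i < R) (tnth t i : nat))%:Z == b%:Z) &&
          [forall i : 'I_R, (val i == 0%N) ==> ((tnth t i : nat) <= minn m ((m + 1) * j))%N])
     ((\prod_(i < R) 'C(m, tnth t i))%:R *
      ((\prod_(i < R)
          rising ((m + 1) * j + \sum_(l < R | (l < i)%N) (tnth t l : nat) + i) (tnth t i))%:R
       / (\prod_(r < R) rising ((m + 1) * (j + r) + 1) m)%:R)) =
  miss_weight R b.
Proof.
rewrite -(sum_tuple_term R (leqnn b)); under eq_bigr do rewrite tuple_termE.
rewrite big_mkcond [RHS]big_mkcond; apply: eq_bigr => t _.
have -> : (\sum_(i < R) (tnth t i : nat))%N = sumn (map val t).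
  by rewrite sumnE big_map big_tuple.
rewrite eqz_nat; case: eqP => //= _; case: forallP => // head_ok.
case: R t head_ok => [|R] t head_ok; first by case: head_ok => -[].
rewrite tuple_term_head_gt // ltnNge; apply/negP => le_head; apply: head_ok => i.
by apply/implyP => /eqP i0; rewrite val_tnth_nth i0.
Qed.

End MissWeights.

Definition factorial_law (q : nat) (V : nat -> rat) (c : nat) : rat :=
  if (c <= q)%N then c`!%:R * V (q - c)%N else 0.

(* The ansatz P(c hits) = c! V (q - c) turns one step of the hitting chain
   with total weight w into the recurrence of partial_miss_weightS. *)
Lemma factorial_lawS q (w : rat) (V V' : nat -> rat) : w != 0 ->
  V q.+1 = 0 -> V' 0%N * w = V 0%N ->
  (forall c, (c <= q)%N -> V' (q - c).+1 * w = V (q - c).+1 + (w - c.+1%:R) * V (q - c)%N) ->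
  forall c, factorial_law q.+1 V' c =
    factorial_law q V c * (1 - c.+1%:R / w) +
    (if c is c'.+1 then factorial_law q V c' * (c'.+1%:R / w) else 0).
Proof.
move=> w_neq0 Vq V'0 V'S c; rewrite /factorial_law.
have V'_div b : V' b = V' b * w / w by rewrite mulfK.
case: (ltngtP c q.+1) => [|lt_q1c|->]; last 1 first.
- by rewrite ltnn !subnn leqnn V'_div V'0 factS natrM mul0r add0r; field.
- rewrite ltnS => le_cq; rewrite (leq_trans le_cq) //; case: c le_cq => [|c] le_cq.
    have := V'S 0%N (leq0n q); rewrite !subn0 Vq add0r => V'q.
    by rewrite V'_div V'q; field.
  rewrite (ltnW le_cq) subSS (_ : q - c = (q - c.+1).+1)%N; last by lia.
  by rewrite V'_div V'S // !factS !natrM; field.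
- case: c lt_q1c => [|c] //; rewrite ltnS => lt_qc.
  by rewrite (leqNgt c q) lt_qc (ltnNge c q) (ltnW lt_qc) /= mul0r add0r mul0r.
Qed.

Section CountProb.
Variables m n j : nat.
Hypotheses (m_gt0 : (0 < m)%N) (le_jn : (j <= n)%N).

Lemma hit_prob_before K c : (K < j * m)%N -> hit_prob m j K c = 0.
Proof. by move=> ltK; rewrite /hit_prob /choice_time ltnS leqNgt ltn_divLR // ltK. Qed.

Lemma hit_prob_block r i c : (i < m)%N ->
  hit_prob m j (j * m + r * m + i) c = c.+1%:R / (block_weight m j r + i)%:R.
Proof.
move=> lt_im; rewrite /hit_prob /choice_time -mulnDl divnMDl // divn_small // addn0.
by rewrite ltnS leq_addr /block_weight; congr (_ / _%:R); lia.
Qed.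

Lemma count_prob_before K c : (K <= j * m)%N -> count_prob m n j K c = (c == 0%N)%:R.
Proof.
elim: K c => [|K IH] c leK; first exact: count_prob0.
rewrite count_probS //; last by apply: leq_trans leK _; rewrite leq_mul2r le_jn orbT.
rewrite hit_prob_before // subr0 mulr1 IH 1?ltnW //.
by case: c => // c; rewrite hit_prob_before // mulr0 addr0.
Qed.

Lemma count_prob_within_block r : (j + r < n)%N ->
  (forall c, count_prob m n j (j * m + r * m) c = factorial_law (r * m) (miss_weight m j r) c) ->
  forall i, (i <= m)%N -> forall c,
    count_prob m n j (j * m + r * m + i) c =
    factorial_law (r * m + i) (partial_miss_weight m j r i) c.
Proof.
move=> lt_jrn block_start; elim=> [|i IH] le_im c.
  rewrite !addn0 block_start /factorial_law.
  by case: ifP => // _; rewrite partial_miss_weight0.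
have lt_im : (i < m)%N by [].
rewrite addnS count_probS //; last first.
  apply: leq_trans (_ : (j + r).+1 * m <= n * m)%N; first by rewrite mulSn; lia.
  by rewrite leq_mul2r lt_jrn orbT.
have w_neq0 : (block_weight m j r + i)%:R != 0 :> rat.
  by rewrite pnatr_eq0 /block_weight addn1.
have others_weightE k : (k <= r * m + i)%N ->
    (others_weight m j r (r * m + i - k))%:R = (block_weight m j r + i)%:R - k.+1%:R :> rat.
  move=> le_k; apply/eqP; rewrite eq_sym subr_eq -natrD eqr_nat; apply/eqP.
  rewrite /others_weight /block_weight; nia.
rewrite addnS (factorial_lawS (V := partial_miss_weight m j r i) w_neq0).
- by case: c => [|c]; rewrite !IH 1?ltnW // !hit_prob_block.
- by apply: partial_miss_weight_gt => [|b0]; [lia | apply: miss_weight_gt].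
- by have := partial_miss_weightS m j r i 0; rewrite addr0.
- by move=> k le_k; rewrite partial_miss_weightS others_weightE.
Qed.

Lemma count_prob_block r : (j + r <= n)%N ->
  forall c, count_prob m n j (j * m + r * m) c = factorial_law (r * m) (miss_weight m j r) c.
Proof.
elim: r => [|r IH] le_jrn c.
  by rewrite mul0n addn0 count_prob_before // /factorial_law leqn0; case: c.
have lt_jrn : (j + r < n)%N by rewrite -addnS.
by rewrite mulSnr addnA (count_prob_within_block lt_jrn (IH (ltnW lt_jrn))).
Qed.

End CountProb.

Lemma sum_nth_eq_count (s : seq nat) j :
  (\sum_(k < size s) (nth 0%N s k == j) = count_mem j s)%N.
Proof. by rewrite -sumn_count sumnE big_map (big_nth 0%N) big_mkord. Qed.

Lemma sum_choice_time_eq m n j : (0 < m)%N ->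
  (\sum_(k < n * m) (choice_time m k == j) = m * ((0 < j) && (j <= n)))%N.
Proof.
move=> m_gt0; elim: n => [|n IH].
  by rewrite mul0n big_ord0; case: j => [|j] /=; rewrite ?andbF muln0.
rewrite mulSnr big_split_ord IH /=.
have -> : (\sum_(k < m) (choice_time m (n * m + k) == j) = m * (n.+1 == j))%N.
  rewrite (eq_bigr (fun _ => n.+1 == j : nat)) ?sum_nat_const ?card_ord // => k _.
  by rewrite /choice_time divnMDl // divn_small // addn0.
case: (ltngtP j n.+1) => [lt_jn1|lt_nj|->].
- by rewrite ltnS in lt_jn1; rewrite lt_jn1 muln0 addn0 andbT.
- by rewrite (leqNgt j n) (ltnW lt_nj) andbF !muln0.
- by rewrite ltnn andbF muln0 add0n andbT muln1.
Qed.

Lemma degree_count_mem m n j s : (0 < m)%N -> (j <= n)%N -> size s = (n * m)%N ->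
  degree m n s j = (count_mem j s + m * (1 - (j == 0%N)))%N.
Proof.
move=> m_gt0 le_jn size_s.
rewrite /degree big_split /= -size_s sum_nth_eq_count size_s sum_choice_time_eq //.
by case: j le_jn => [|j] le_jn; rewrite ?le_jn.
Qed.

Lemma prob_degree_count_prob m n j c : (0 < m)%N -> (j <= n)%N ->
  prob_degree m n j (c + m * (1 - (j == 0%N)))%N = count_prob m n j (n * m) c.
Proof.
move=> m_gt0 le_jn; rewrite /prob_degree /count_prob; apply: eq_bigr => s _.
rewrite degree_count_mem ?size_map ?size_tuple // path_prob_history eqz_nat eqn_add2r.
by rewrite -mulrb mulr_natl.
Qed.

Lemma prob_degree_lt m n j (d : int) : (0 < m)%N -> (j <= n)%N ->
  d < (m * (1 - (j == 0%N)))%N%:Z -> prob_degree m n j d = 0.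
Proof.
move=> m_gt0 le_jn lt_d; rewrite /prob_degree big1 // => s _; rewrite ifF //.
apply/negbTE; apply: contraTneq lt_d => <-.
by rewrite degree_count_mem ?size_map ?size_tuple // -leNgt lez_nat leq_addl.
Qed.

Theorem theorem3 (m n j : nat) (d : int) :
  (1 <= m)%N -> (j <= n)%N ->
  let T : int := (m * (n - j + 1 - (j == 0%N)))%:Z - d in
  prob_degree m n j d =
    (intfact (d - (m * (1 - (j == 0%N)))%:Z))%:R *
    \sum_(b : (n - j).-tuple 'I_(absz T).+1 |
            ((\sum_(i < n - j) (tnth b i : nat))%:Z == T) &&
            [forall i : 'I_(n - j),
               (val i == 0%N) ==> ((tnth b i : nat) <= minn m ((m + 1) * j))%N])
      ((\prod_(i < n - j) 'C(m, tnth b i))%:R *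
       ((\prod_(i < n - j)
           rising ((m + 1) * j + \sum_(l < n - j | (l < i)%N) (tnth b l : nat) + i)
                  (tnth b i))%:R
        / (\prod_(r < n - j) rising ((m + 1) * (j + r) + 1) m)%:R)).
Proof.
move=> m_gt0 le_jn T; set e := (m * (1 - (j == 0%N)))%N.
have [le_ed|lt_de] := leP e%:Z d; last first.
  rewrite prob_degree_lt //; have : d - e%:Z < 0 by rewrite subr_lt0.
  by case: (d - e%:Z) => // k _; rewrite mul0r.
have [c dE] : exists c, d = (c + e)%N%:Z.
  by exists (absz (d - e%:Z)); rewrite PoszD gez0_abs ?subr_ge0 // subrK.
rewrite dE PoszD addrK prob_degree_count_prob //.
have nE : (n * m = j * m + (n - j) * m)%N by rewrite -mulnDl subnKC.
rewrite nE count_prob_block ?subnKC // /factorial_law.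
have TE : T = ((n - j) * m)%:Z - c%:Z.
  by rewrite /T dE /e; case: (j == 0%N) => /=; lia.
case: leqP => [le_c|lt_c]; first by rewrite TE subzn // sum_tuple_term_constrained.
have T_lt0 : T < 0 by rewrite TE subr_lt0 ltz_nat.
rewrite big_pred0 ?mulr0 // => b; case: eqP => // sE.
by rewrite -sE ltz_nat in T_lt0.
Qed.
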